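(* Let $G$ be a cubical $\omega$-category with connections. For each $n\ge0$, the set $\Phi_n(G_n)$ is an $\omega$-category with the following structure: for $0\le p<n$, $d^\alpha_px=\varepsilon_1^{n-p}(\partial^\alpha_1)^{n-p}x$ and $x\#_py=x\circ_{n-p}y$ where defined; for $p\ge n$, $d^\alpha_px=x$ and the only composites are $x\#_px=x$. Moreover $\varepsilon_1$ maps $\Phi_n(G_n)$ into $\Phi_{n+1}(G_{n+1})$, giving a sequence of $\omega$-categories and homomorphisms $\Phi_0(G_0)\xrightarrow{\varepsilon_1}\Phi_1(G_1)\xrightarrow{\varepsilon_1}\Phi_2(G_2)\to\cdots$.
   Context: An $\omega$-category is a set $X$ with unary operations $d^-_p,d^+_p$ and partial binary operations $\#_p$ ($p\ge0$) such that: $x\#_py$ is defined iff $d^+_px=d^-_py$; $d^\beta_qd^\alpha_px=d^\beta_qx$ for $q<p$ and $=d^\alpha_px$ for $q\ge p$; if $x\#_py$ is defined then $d^-_p(x\#_py)=d^-_px$, $d^+_p(x\#_py)=d^+_py$, $d^\beta_q(x\#_py)=d^\beta_qx\#_pd^\beta_qy$ ($q\ne p$); $d^-_px\#_px=x\#_pd^+_px=x$; $\#_p$ is associative; for $p\ne q$, $(x\#_py)\#_q(x'\#_py')=(x\#_qx')\#_p(y\#_qy')$ whenever both sides are defined; each $x$ has a dimension $\dim x$ with $d^\alpha_px=x$ iff $p\ge\dim x$. Homomorphisms preserve all operations. A cubical $\omega$-category with connections $G$ consists of sets $G_n$ ($n\ge0$), face maps $\partial^\alpha_i:G_n\to G_{n-1}$,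 degeneracies $\varepsilon_i:G_{n-1}\to G_n$, connections $\Gamma^\alpha_i:G_n\to G_{n+1}$ ($1\le i\le n$, $\alpha=\pm$) and partial compositions $\circ_j$ on $G_n$ ($1\le j\le n$, $a\circ_jb$ defined iff $\partial^+_ja=\partial^-_jb$) satisfying: $\partial^\alpha_i\partial^\beta_j=\partial^\beta_{j-1}\partial^\alpha_i$ ($i<j$), $\varepsilon_i\varepsilon_j=\varepsilon_{j+1}\varepsilon_i$ ($i\le j$), $\partial^\alpha_i\varepsilon_j=\varepsilon_{j-1}\partial^\alpha_i$ ($i<j$), $\varepsilon_j\partial^\alpha_{i-1}$ ($i>j$), $\mathrm{id}$ ($i=j$); $\Gamma^\alpha_i\Gamma^\beta_j=\Gamma^\beta_{j+1}\Gamma^\alpha_i$ ($i<j$), $\Gamma^\alpha_i\Gamma^\alpha_i=\Gamma^\alpha_{i+1}\Gamma^\alpha_i$, $\Gamma^\alpha_i\varepsilon_j=\varepsilon_{j+1}\Gamma^\alpha_i$ ($i<j$), $\varepsilon_j\Gamma^\alpha_{i-1}$ ($i>j$), $\Gamma^\alpha_j\varepsilon_j=\varepsilon_{j+1}\varepsilon_j$, $\partial^\alpha_i\Gamma^\beta_j=\Gamma^\beta_{j-1}\partial^\alpha_i$ ($i<j$), $\Gamma^\beta_j\partial^\alpha_{i-1}$ ($i>j+1$), $\partial^\alpha_j\Gamma^\alpha_j=\partial^\alpha_{j+1}\Gamma^\alpha_j=\mathrm{id}$, $\partial^\alpha_j\Gamma^{-\alpha}_j=\partial^\alpha_{j+1}\Gamma^{-\alpha}_j=\varepsilon_j\partial^\alpha_j$;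 $\partial^-_j(a\circ_jb)=\partial^-_ja$, $\partial^+_j(a\circ_jb)=\partial^+_jb$, $\partial^\alpha_i(a\circ_jb)=\partial^\alpha_ia\circ_{j-1}\partial^\alpha_ib$ ($i<j$), $\partial^\alpha_ia\circ_j\partial^\alpha_ib$ ($i>j$); interchange $(a\circ_ib)\circ_j(c\circ_id)=(a\circ_jc)\circ_i(b\circ_jd)$ for $i\ne j$; $\varepsilon_i(a\circ_jb)=\varepsilon_ia\circ_{j+1}\varepsilon_ib$ ($i\le j$), $\varepsilon_ia\circ_j\varepsilon_ib$ ($i>j$); $\Gamma^\alpha_i(a\circ_jb)=\Gamma^\alpha_ia\circ_{j+1}\Gamma^\alpha_ib$ ($i<j$), $\Gamma^\alpha_ia\circ_j\Gamma^\alpha_ib$ ($i>j$); $\Gamma^+_j(a\circ_jb)=(\Gamma^+_ja\circ_j\varepsilon_ja)\circ_{j+1}(\varepsilon_{j+1}a\circ_j\Gamma^+_jb)$, $\Gamma^-_j(a\circ_jb)=(\Gamma^-_ja\circ_j\varepsilon_{j+1}b)\circ_{j+1}(\varepsilon_jb\circ_j\Gamma^-_jb)$; each $\circ_j$ is a category structure with identities $\varepsilon_jy$; $\Gamma^+_ix\circ_i\Gamma^-_ix=\varepsilon_{i+1}x$, $\Gamma^+_ix\circ_{i+1}\Gamma^-_ix=\varepsilon_ix$. Folding operations on $G_n$: $\psi_ix=\Gamma^+_i\partial^-_{i+1}x\circ_{i+1}x\circ_{i+1}\Gamma^-_i\partial^+_{i+1}x$ ($1\le i\le n-1$), $\Psi_r=\psi_{r-1}\cdots\psi_1$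 ($1\le r\le n$), $\Phi_n=\Psi_1\Psi_2\cdots\Psi_n$ (so $\Phi_0=\Phi_1=\mathrm{id}$). *)

From mathcomp Require Import all_boot.

(* Conventions: signs alpha are booleans, true = +, false = -.
   Indices are 1-based as in the paper.
   fc G n i a : G_{n+1} -> G_n      is  \partial^a_i   (1 <= i <= n+1)
   dg G n i   : G_n -> G_{n+1}      is  \varepsilon_i  (1 <= i <= n+1)
   cn G n i a : G_n -> G_{n+1}      is  \Gamma^a_i     (1 <= i <= n)
   cp G n j   : G_{n+1} -> G_{n+1} -> G_{n+1} is \circ_j (1 <= j <= n+1),
     a total function whose value is only meaningful (and only constrained)
     when  fc n j true a = fc n j false b, i.e. when a \circ_j b is defined. *)

Record cubical_omega_cat := {
  C : nat -> Type;
  fc : forall n : nat, nat -> bool -> C n.+1 -> C n;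
  dg : forall n : nat, nat -> C n -> C n.+1;
  cn : forall n : nat, nat -> bool -> C n -> C n.+1;
  cp : forall n : nat, nat -> C n.+1 -> C n.+1 -> C n.+1;

  fc_fc : forall n i j a b (x : C n.+2), 1 <= i -> i < j -> j <= n.+2 ->
    fc n i a (fc n.+1 j b x) = fc n j.-1 b (fc n.+1 i a x);
  dg_dg : forall n i j (x : C n), 1 <= i -> i <= j -> j <= n.+1 ->
    dg n.+1 i (dg n j x) = dg n.+1 j.+1 (dg n i x);
  fc_dg_lt : forall n i j a (x : C n.+1), 1 <= i -> i < j -> j <= n.+2 ->
    fc n.+1 i a (dg n.+1 j x) = dg n j.-1 (fc n i a x);
  fc_dg_gt : forall n i j a (x : C n.+1), 1 <= j -> j < i -> i <= n.+2 ->
    fc n.+1 i a (dg n.+1 j x) = dg n j (fc n i.-1 a x);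
  fc_dg_eq : forall n i a (x : C n), 1 <= i -> i <= n.+1 ->
    fc n i a (dg n i x) = x;
  cn_cn_lt : forall n i j a b (x : C n), 1 <= i -> i < j -> j <= n ->
    cn n.+1 i a (cn n j b x) = cn n.+1 j.+1 b (cn n i a x);
  cn_cn_eq : forall n i a (x : C n), 1 <= i -> i <= n ->
    cn n.+1 i a (cn n i a x) = cn n.+1 i.+1 a (cn n i a x);
  cn_dg_lt : forall n i j a (x : C n), 1 <= i -> i < j -> j <= n.+1 ->
    cn n.+1 i a (dg n j x) = dg n.+1 j.+1 (cn n i a x);
  cn_dg_gt : forall n i j a (x : C n), 1 <= j -> j < i -> i <= n.+1 ->
    cn n.+1 i a (dg n j x) = dg n.+1 j (cn n i.-1 a x);
  cn_dg_eq : forall n j a (x : C n), 1 <= j -> j <= n.+1 ->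
    cn n.+1 j a (dg n j x) = dg n.+1 j.+1 (dg n j x);
  fc_cn_lt : forall n i j a b (x : C n.+1), 1 <= i -> i < j -> j <= n.+1 ->
    fc n.+1 i a (cn n.+1 j b x) = cn n j.-1 b (fc n i a x);
  fc_cn_gt : forall n i j a b (x : C n.+1), 1 <= j -> j.+1 < i -> i <= n.+2 ->
    fc n.+1 i a (cn n.+1 j b x) = cn n j b (fc n i.-1 a x);
  fc_cn_same : forall n j a (x : C n), 1 <= j -> j <= n ->
    fc n j a (cn n j a x) = x /\ fc n j.+1 a (cn n j a x) = x;
  fc_cn_opp : forall n j a (x : C n.+1), 1 <= j -> j <= n.+1 ->
    fc n.+1 j a (cn n.+1 j (~~ a) x) = dg n j (fc n j a x) /\
    fc n.+1 j.+1 a (cn n.+1 j (~~ a) x) = dg n j (fc n j a x);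

  fc_cp_eq : forall n j (a b : C n.+1), 1 <= j -> j <= n.+1 ->
    fc n j true a = fc n j false b ->
    fc n j false (cp n j a b) = fc n j false a /\
    fc n j true (cp n j a b) = fc n j true b;
  fc_cp_lt : forall n i j al (a b : C n.+2), 1 <= i -> i < j -> j <= n.+2 ->
    fc n.+1 j true a = fc n.+1 j false b ->
    fc n.+1 i al (cp n.+1 j a b) = cp n j.-1 (fc n.+1 i al a) (fc n.+1 i al b);
  fc_cp_gt : forall n i j al (a b : C n.+2), 1 <= j -> j < i -> i <= n.+2 ->
    fc n.+1 j true a = fc n.+1 j false b ->
    fc n.+1 i al (cp n.+1 j a b) = cp n j (fc n.+1 i al a) (fc n.+1 i al b);
  cp_interchange : forall n i j (a b c d : C n.+1),
    1 <= i -> i <= n.+1 -> 1 <= j -> j <= n.+1 -> i != j ->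
    fc n i true a = fc n i false b -> fc n i true c = fc n i false d ->
    fc n j true a = fc n j false c -> fc n j true b = fc n j false d ->
    cp n j (cp n i a b) (cp n i c d) = cp n i (cp n j a c) (cp n j b d);
  dg_cp_le : forall n i j (a b : C n.+1), 1 <= i -> i <= j -> j <= n.+1 ->
    fc n j true a = fc n j false b ->
    dg n.+1 i (cp n j a b) = cp n.+1 j.+1 (dg n.+1 i a) (dg n.+1 i b);
  dg_cp_gt : forall n i j (a b : C n.+1), 1 <= j -> j < i -> i <= n.+2 ->
    fc n j true a = fc n j false b ->
    dg n.+1 i (cp n j a b) = cp n.+1 j (dg n.+1 i a) (dg n.+1 i b);
  cn_cp_lt : forall n i j al (a b : C n.+1), 1 <= i -> i < j -> j <= n.+1 ->
    fc n j true a = fc n j false b ->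
    cn n.+1 i al (cp n j a b) = cp n.+1 j.+1 (cn n.+1 i al a) (cn n.+1 i al b);
  cn_cp_gt : forall n i j al (a b : C n.+1), 1 <= j -> j < i -> i <= n.+1 ->
    fc n j true a = fc n j false b ->
    cn n.+1 i al (cp n j a b) = cp n.+1 j (cn n.+1 i al a) (cn n.+1 i al b);
  cn_cp_plus : forall n j (a b : C n.+1), 1 <= j -> j <= n.+1 ->
    fc n j true a = fc n j false b ->
    cn n.+1 j true (cp n j a b) =
    cp n.+1 j.+1 (cp n.+1 j (cn n.+1 j true a) (dg n.+1 j a))
                 (cp n.+1 j (dg n.+1 j.+1 a) (cn n.+1 j true b));
  cn_cp_minus : forall n j (a b : C n.+1), 1 <= j -> j <= n.+1 ->
    fc n j true a = fc n j false b ->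
    cn n.+1 j false (cp n j a b) =
    cp n.+1 j.+1 (cp n.+1 j (cn n.+1 j false a) (dg n.+1 j.+1 b))
                 (cp n.+1 j (dg n.+1 j b) (cn n.+1 j false b));
  cp_assoc : forall n j (a b c : C n.+1), 1 <= j -> j <= n.+1 ->
    fc n j true a = fc n j false b -> fc n j true b = fc n j false c ->
    cp n j (cp n j a b) c = cp n j a (cp n j b c);
  cp_unit : forall n j (a : C n.+1), 1 <= j -> j <= n.+1 ->
    cp n j (dg n j (fc n j false a)) a = a /\
    cp n j a (dg n j (fc n j true a)) = a;
  cn_cp_inv : forall n i (x : C n.+1), 1 <= i -> i <= n.+1 ->
    cp n.+1 i (cn n.+1 i true x) (cn n.+1 i false x) = dg n.+1 i.+1 x /\
    cp n.+1 i.+1 (cn n.+1 i true x) (cn n.+1 i false x) = dg n.+1 i x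
}.

(* omega-categories, on a subset S of a type X.  Partial compositions are
   given as a relation  c p x y z  meaning "x #_p y is defined and equals z". *)
Definition omega_cat {X : Type} (S : X -> Prop) (d : nat -> bool -> X -> X)
    (c : nat -> X -> X -> X -> Prop) : Prop :=
  (forall p a x, S x -> S (d p a x)) /\
  (forall p x y z, S x -> S y -> c p x y z -> S z) /\
  (forall p x y z z', S x -> S y -> c p x y z -> c p x y z' -> z = z') /\
  (forall p x y, S x -> S y -> ((exists z, c p x y z) <-> d p true x = d p false y)) /\
  (forall p q a b x, S x -> q < p -> d q b (d p a x) = d q b x) /\
  (forall p q a b x, S x -> p <= q -> d q b (d p a x) = d p a x) /\
  (forall p x y z, S x -> S y -> c p x y z ->
     d p false z = d p false x /\ d p true z = d p true y) /\
  (forall p q b x y z, S x -> S y -> c p x y z -> q != p ->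
     c p (d q b x) (d q b y) (d q b z)) /\
  (forall p x, S x -> c p (d p false x) x x /\ c p x (d p true x) x) /\
  (forall p x y z xy yz, S x -> S y -> S z -> c p x y xy -> c p y z yz ->
     exists w, c p xy z w /\ c p x yz w) /\
  (forall p q x y x' y' xy x'y' w xx' yy' w', p != q ->
     S x -> S y -> S x' -> S y' ->
     c p x y xy -> c p x' y' x'y' -> c q xy x'y' w ->
     c q x x' xx' -> c q y y' yy' -> c p xx' yy' w' -> w = w') /\
  (forall x, S x -> exists m, forall p a, d p a x = x <-> m <= p).

Definition omega_hom {X Y : Type} (S : X -> Prop) (d : nat -> bool -> X -> X)
    (c : nat -> X -> X -> X -> Prop) (S' : Y -> Prop)
    (d' : nat -> bool -> Y -> Y) (c' : nat -> Y -> Y -> Y -> Prop)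
    (f : X -> Y) : Prop :=
  (forall x, S x -> S' (f x)) /\
  (forall p a x, S x -> f (d p a x) = d' p a (f x)) /\
  (forall p x y z, S x -> S y -> c p x y z -> c' p (f x) (f y) (f z)).

Section Folding.
Variable G : cubical_omega_cat.

Definition psi (n i : nat) (x : C G n.+2) : C G n.+2 :=
  cp G n.+1 i.+1
    (cp G n.+1 i.+1 (cn G n.+1 i true (fc G n.+1 i.+1 false x)) x)
    (cn G n.+1 i false (fc G n.+1 i.+1 true x)).

(* psi_i on G_n (identity in dimensions 0, 1 where no psi_i exists) *)
Definition psiG (n : nat) : nat -> C G n -> C G n :=
  match n as k return nat -> C G k -> C G k with
  | S (S m) => psi m
  | _ => fun _ x => x
  end.

(* Psi_r = psi_{r-1} ... psi_1  (Psi_1 = id) *)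
Fixpoint Psi (n r : nat) (x : C G n) : C G n :=
  match r with
  | 0 => x
  | S r' => match r' with 0 => x | _ => psiG n r' (Psi n r' x) end
  end.

(* Psi_1 Psi_2 ... Psi_k *)
Fixpoint PhiAux (n k : nat) (x : C G n) : C G n :=
  match k with
  | 0 => x
  | S k' => PhiAux n k' (Psi n k'.+1 x)
  end.

Definition Phi (n : nat) (x : C G n) : C G n := PhiAux n n x.

Definition PhiImage (n : nat) (y : C G n) : Prop := exists x, Phi n x = y.

(* collapse k m a = eps_1^k (partial^a_1)^k on G_m  (for k <= m) *)
Fixpoint collapse (k : nat) : forall m : nat, bool -> C G m -> C G m :=
  match k with
  | 0 => fun m a x => x
  | S k' => fun m => match m as m0 return bool -> C G m0 -> C G m0 with
                     | 0 => fun a x => x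
                     | S m' => fun a x => dg G m' 1 (collapse k' m' a (fc G m' 1 a x))
                     end
  end.

Definition dPhi (n p : nat) (a : bool) (x : C G n) : C G n :=
  if p < n then collapse (n - p) n a x else x.

Definition compPhi (n : nat) : nat -> C G n -> C G n -> C G n -> Prop :=
  match n as k return nat -> C G k -> C G k -> C G k -> Prop with
  | 0 => fun p x y z => x = y /\ z = x
  | S m => fun p x y z =>
      if p < m.+1 then
        fc G m (m.+1 - p) true x = fc G m (m.+1 - p) false y /\
        z = cp G m (m.+1 - p) x y
      else x = y /\ z = x
  end.

End Folding.

From Pilot Require Import Defs.
From mathcomp Require Import all_boot zify.
From Stdlib Require Import Classical FunctionalExtensionality PropExtensionality.

(* Write [x ~ eps_1^k G] when x is k times [eps_1]-degenerate.  An element of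
   G_n lies in Phi_n(G_n) iff [d^a_i x ~ eps_1^(i-1) G] for all 2 <= i <= n:
   in Phi_n = Psi_1 ... Psi_n, the fold Psi_i = psi_(i-1) Psi_(i-1) makes face
   i of this shape (as d_i psi_(i-1) y = eps_(i-1) d_(i-1) d_(i-1) y), and the
   later Psi_k, k < i, leave that face alone; conversely psi_i fixes x as soon
   as d_(i+1) x is eps_i-degenerate, because Gamma_i eps_i = eps_(i+1) eps_i
   turns the connection factors of psi_i x into identities.  On such x the
   collapse eps_1^k d_1^k equals eps_k d_k, so the omega-category axioms in
   dimension p reduce to the cubical axioms in direction n - p. *)

Set Implicit Arguments.
Unset Strict Implicit.
Unset Printing Implicit Defensive.

Lemma omega_cat_discrete (X : Type) (S : X -> Prop) (d : nat -> bool -> X -> X) :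
  (forall p a x, d p a x = x) ->
  omega_cat S d (fun _ x y z => x = y /\ z = x).
Proof.
move=> dE.
split; first by move=> *; rewrite dE.
split; first by move=> p x y z Sx _ [_ ->].
split; first by move=> p x y z z' _ _ [_ ->] [_ ->].
split; first by move=> p x y _ _; rewrite !dE; split=> [[z []] | ->] //; exists y.
do 2 (split; first by move=> *; rewrite !dE).
split; first by move=> p x y z _ _ [-> ->].
split; first by move=> p q b x y z _ _ [-> ->]; rewrite !dE.
split; first by move=> *; rewrite !dE.
split; first by move=> p x y z xy yz _ _ _ [-> ->] [-> ->]; exists z.
split; first by move=> p q x y x' y' xy x'y' w xx' yy' w' _ _ _ _ _
                 [-> ->] [-> ->] [_ ->] [_ ->] [_ ->] [_ ->].
by move=> x _; exists 0 => p a; rewrite dE.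
Qed.

Lemma dimension_exists (X : Type) (d : nat -> bool -> X -> X) (x : X) (N : nat) :
  (forall p q a b, p <= q -> d q b (d p a x) = d p a x) ->
  (forall a, d N a x = x) ->
  exists m, forall p a, d p a x = x <-> m <= p.
Proof.
move=> d_ge.
have fixed_up p q : p <= q -> (forall a, d p a x = x) -> forall b, d q b x = x.
  by move=> le_pq fix_p b; rewrite -{1}(fix_p true) d_ge // fix_p.
have fixed_any p a : d p a x = x -> forall b, d p b x = x.
  by move=> fix_pa b; rewrite -fix_pa d_ge.
elim: N => [|N IH] fix_N.
  by exists 0 => p a; split=> // _; apply: fixed_up fix_N a.
have [fix_N' | not_fix_N'] := classic (forall a, d N a x = x); first exact: IH.
exists N.+1 => p a; split=> [fix_pa | le_Np]; last exact: fixed_up fix_N a.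
rewrite ltnNge; apply/negP => le_pN.
by apply: not_fix_N'; apply: fixed_up le_pN _; apply: fixed_any fix_pa.
Qed.

Section Folding.
Variable G : cubical_omega_cat.
Local Notation fc := (Defs.fc G).
Local Notation dg := (Defs.dg G).
Local Notation cp := (Defs.cp G).
Local Notation cn := (Defs.cn G).
Local Notation psi := (Defs.psi G).
Local Notation Psi := (Defs.Psi G).
Local Notation PhiAux := (Defs.PhiAux G).
Local Notation collapse := (Defs.collapse G).

Lemma dg_inj m i (u v : C G m) : 1 <= i <= m.+1 -> dg m i u = dg m i v -> u = v.
Proof.
move=> /andP[i_gt0 i_le] E.
by rewrite -(fc_dg_eq G m i true u) // -(fc_dg_eq G m i true v) // E.
Qed.

Fixpoint degen1 (k : nat) : forall m, C G m -> Prop :=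
  match k with
  | 0 => fun _ _ => True
  | k'.+1 => fun m => match m as m0 return C G m0 -> Prop with
                     | 0 => fun _ => False
                     | m'.+1 => fun y => exists2 w, y = dg m' 1 w & degen1 k' w
                     end
  end.

Lemma degen1_le k m (y : C G m) : degen1 k y -> k <= m.
Proof.
elim: k m y => [//|k IH] [|m] y //= [w _ /IH]; lia.
Qed.

Lemma degen1_dg k m (v : C G m) : degen1 k v -> degen1 k.+1 (dg m k.+1 v).
Proof.
elim: k m v => [|k IH] m v /=; first by exists v.
case: m v => [//|m] _ [w -> Dw].
exists (dg m k.+1 w); last exact: IH.
have le_km := degen1_le Dw; rewrite (dg_dg G m 1 k.+1 w) //; lia.
Qed.

Lemma degen1_fc_gt k m (y : C G m.+1) i a :
  degen1 k y -> k < i <= m.+1 -> degen1 k (fc m i a y).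
Proof.
elim: k m y i => [//|k IH] m y i /= [w {y}-> Dw] /andP[lt_ki le_im].
case: m w Dw le_im => [|m] w Dw le_im; first lia.
rewrite (fc_dg_gt G m i 1 a w) //; try lia.
exists (fc m i.-1 a w) => //; apply: IH => //; lia.
Qed.

Lemma degen1_fc_le k m (y : C G m.+1) i a :
  degen1 k y -> 1 <= i <= k -> degen1 k.-1 (fc m i a y).
Proof.
elim: k m y i => [|k IH] m y i /=; first lia.
move=> [w {y}-> Dw] /andP[i_gt0 le_ik].
have [lt_1i | le_i1] := ltnP 1 i; last first.
  by rewrite (_ : i = 1) ?(fc_dg_eq G m 1 a w) //; lia.
case: m w Dw => [|m] w Dw; first by have := degen1_le Dw; lia.
have le_km := degen1_le Dw; rewrite (fc_dg_gt G m i 1 a w) //; try lia.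
case: k IH Dw le_ik le_km => [|k] IH Dw le_ik le_km; first lia.
exists (fc m i.-1 a w) => //; apply: (IH m w i.-1 Dw); lia.
Qed.

Lemma degen1_dgP k m (y : C G m.+1) i :
  degen1 k y -> 1 <= i <= k -> exists t, y = dg m i t.
Proof.
elim: k m y i => [|k IH] m y i /=; first lia.
move=> [w {y}-> Dw] /andP[i_gt0 le_ik].
have [lt_1i | le_i1] := ltnP 1 i; last by exists w; rewrite (_ : i = 1) //; lia.
case: m w Dw => [|m] w Dw; first by case: k Dw IH le_ik => [|k] //=; lia.
have [t ->] := IH m w i.-1 Dw ltac:(lia).
have le_km := degen1_le Dw.
by exists (dg m 1 t); rewrite (dg_dg G m 1 i.-1 t) ?prednK //; lia.
Qed.

Lemma degen1_cp k m (y1 y2 : C G m.+1) j :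
  degen1 k y1 -> degen1 k y2 -> k < j <= m.+1 ->
  fc m j true y1 = fc m j false y2 -> degen1 k (cp m j y1 y2).
Proof.
elim: k m y1 y2 j => [//|k IH] m y1 y2 j /= [w1 {y1}-> D1] [w2 {y2}-> D2].
move=> /andP[lt_kj le_jm].
case: m w1 w2 D1 D2 le_jm => [|m] w1 w2 D1 D2 le_jm; first lia.
rewrite (fc_dg_gt G m j 1 true w1) ?(fc_dg_gt G m j 1 false w2) //; try lia.
move/dg_inj => /(_ ltac:(lia)) E.
rewrite -[j]prednK; last lia.
rewrite -(dg_cp_le G m 1 j.-1 w1 w2) //; try lia.
exists (cp m j.-1 w1 w2) => //; apply: IH => //; lia.
Qed.

Lemma degen1_cp_id k m (y1 y2 : C G m.+1) j :
  degen1 k y1 -> degen1 k y2 -> 1 <= j <= k ->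
  fc m j true y1 = fc m j false y2 -> cp m j y1 y2 = y1.
Proof.
elim: k m y1 y2 j => [|k IH] m y1 y2 j /=; first lia.
move=> [w1 {y1}-> D1] [w2 {y2}-> D2] /andP[j_gt0 le_jk].
have le_km := degen1_le D1.
have [lt_1j | le_j1] := ltnP 1 j; last first.
  rewrite (_ : j = 1); last lia.
  rewrite !(fc_dg_eq G m 1) // => <-.
  by have := (cp_unit G m 1 (dg m 1 w1) isT ltac:(lia)).1; rewrite (fc_dg_eq G m 1).
case: m w1 w2 D1 D2 le_km => [|m] w1 w2 D1 D2 le_km; first lia.
rewrite (fc_dg_gt G m j 1 true w1) ?(fc_dg_gt G m j 1 false w2) //; try lia.
move/dg_inj => /(_ ltac:(lia)) E.
rewrite -[j]prednK; last lia.
rewrite -(dg_cp_le G m 1 j.-1 w1 w2) //; try lia.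
rewrite (IH m w1 w2 j.-1) //; lia.
Qed.

Definition folded (n : nat) : C G n -> Prop :=
  match n with
  | 0 => fun _ => True
  | m.+1 => fun x => forall i a, i.+2 <= m.+1 -> degen1 i.+1 (fc m i.+2 a x)
  end.

Lemma psi_id m i (x : C G m.+2) : 1 <= i <= m.+1 ->
  (forall a, exists t, fc m.+1 i.+1 a x = dg m i t) -> psi m i x = x.
Proof.
move=> /andP[i_gt0 le_im] x_degen.
have [t0 E0] := x_degen false; have [t1 E1] := x_degen true.
rewrite /Defs.psi E0 E1 (cn_dg_eq G m i true t0) // (cn_dg_eq G m i false t1) //.
rewrite -E0 -E1 (cp_unit G m.+1 i.+1 x isT ltac:(lia)).1.
by rewrite (cp_unit G m.+1 i.+1 x isT ltac:(lia)).2.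
Qed.

Lemma fc_psi_next m i a (y : C G m.+2) : 1 <= i <= m.+1 ->
  fc m.+1 i.+1 a (psi m i y) = dg m i (fc m i a (fc m.+1 i a y)).
Proof.
move=> /andP[i_gt0 le_im]; rewrite /Defs.psi.
set u := fc m.+1 i.+1 false y; set v := fc m.+1 i.+1 true y.
set A := cn m.+1 i true u; set B := cn m.+1 i false v.
have hA : fc m.+1 i.+1 true A = u := (fc_cn_same G m.+1 i true u i_gt0 ltac:(lia)).2.
have hB : fc m.+1 i.+1 false B = v := (fc_cn_same G m.+1 i false v i_gt0 ltac:(lia)).2.
have [e1 e2] := fc_cp_eq G m.+1 i.+1 A y isT ltac:(lia) hA.
have h2 : fc m.+1 i.+1 true (cp m.+1 i.+1 A y) = fc m.+1 i.+1 false B by rewrite e2 hB.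
have [e3 e4] := fc_cp_eq G m.+1 i.+1 _ _ isT ltac:(lia) h2.
rewrite -(fc_fc G m i i.+1 a a y) //; try lia.
case: a.
  by rewrite e4 (fc_cn_opp G m i true v i_gt0 le_im).2.
by rewrite e3 e1 (fc_cn_opp G m i false u i_gt0 le_im).2.
Qed.

Lemma fc_psi_gt m i r a (y : C G m.+3) : 1 <= i -> i.+1 < r <= m.+3 ->
  fc m.+2 r a (psi m.+1 i y) = psi m i (fc m.+2 r a y).
Proof.
move=> i_gt0 /andP[lt_ir le_rm]; rewrite /Defs.psi.
set u := fc m.+2 i.+1 false y; set v := fc m.+2 i.+1 true y.
set A := cn m.+2 i true u; set B := cn m.+2 i false v.
have hA : fc m.+2 i.+1 true A = u := (fc_cn_same G m.+2 i true u i_gt0 ltac:(lia)).2.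
have hB : fc m.+2 i.+1 false B = v := (fc_cn_same G m.+2 i false v i_gt0 ltac:(lia)).2.
have [_ e2] := fc_cp_eq G m.+2 i.+1 A y isT ltac:(lia) hA.
have h2 : fc m.+2 i.+1 true (cp m.+2 i.+1 A y) = fc m.+2 i.+1 false B by rewrite e2 hB.
rewrite (fc_cp_gt G m.+1 r i.+1 a _ _ isT lt_ir le_rm h2).
rewrite (fc_cp_gt G m.+1 r i.+1 a _ _ isT lt_ir le_rm hA).
rewrite /A /B (fc_cn_gt G m.+1 r i a true u) // (fc_cn_gt G m.+1 r i a false v) //.
rewrite /u /v -!(fc_fc G m.+1 i.+1 r) //; lia.
Qed.

Lemma fc_psi_degen1 m i r a (y : C G m.+2) : 1 <= i -> i.+1 < r <= m.+2 ->
  (forall b, degen1 r.-1 (fc m.+1 r b y)) -> fc m.+1 r a (psi m i y) = fc m.+1 r a y.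
Proof.
case: m y => [|m] y i_gt0 /andP[lt_ir le_rm] y_degen; first lia.
rewrite fc_psi_gt ?lt_ir //; apply: psi_id; first lia.
move=> b; apply: (degen1_dgP (k := r.-2)); last lia.
by apply: (degen1_fc_le b (y_degen a)); lia.
Qed.

Lemma Psi_SS n k (y : C G n.+2) : Psi n.+2 k.+2 y = psi n k.+1 (Psi n.+2 k.+1 y).
Proof. by []. Qed.

Lemma fc_Psi_degen1 m r k a (y : C G m.+2) : 2 <= r <= m.+2 -> k < r ->
  (forall b, degen1 r.-1 (fc m.+1 r b y)) -> fc m.+1 r a (Psi m.+2 k y) = fc m.+1 r a y.
Proof.
move=> r_bounds lt_kr y_degen.
elim: k a lt_kr => [//|[//|k] IH] a lt_kr.
rewrite Psi_SS fc_psi_degen1 ?IH //; try lia.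
by move=> b; rewrite IH //; lia.
Qed.

Lemma PhiAux_S n k (y : C G n) : PhiAux n k.+1 y = PhiAux n k (Psi n k.+1 y).
Proof. by []. Qed.

Lemma fc_PhiAux_degen1 m r k a (y : C G m.+2) : 2 <= r <= m.+2 -> k < r ->
  (forall b, degen1 r.-1 (fc m.+1 r b y)) -> fc m.+1 r a (PhiAux m.+2 k y) = fc m.+1 r a y.
Proof.
move=> r_bounds; elim: k y a => [//|k IH] y a lt_kr y_degen.
have Psi_degen b : degen1 r.-1 (fc m.+1 r b (Psi m.+2 k.+1 y)).
  by rewrite fc_Psi_degen1.
by rewrite PhiAux_S IH ?fc_Psi_degen1 //; lia.
Qed.

Lemma fc_Psi_last m i a (x : C G m.+2) : i.+2 <= m.+2 ->
  degen1 i.+1 (fc m.+1 i.+2 a (Psi m.+2 i.+2 x)).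
Proof.
elim: i a => [|i IH] a le_im; rewrite Psi_SS fc_psi_next //; apply: degen1_dg => //.
by apply: degen1_fc_gt; [apply: IH | ]; lia.
Qed.

Lemma folded_Phi n (x : C G n) : folded (Phi G n x).
Proof.
case: n x => [|[|m]] x //= i a le_im; rewrite /Phi.
suff PhiAux_folded k : k <= m.+2 -> forall y, i.+2 <= k ->
    degen1 i.+1 (fc m.+1 i.+2 a (PhiAux m.+2 k y)) by apply: PhiAux_folded.
elim: k => [|k IH] le_km y le_ik; first lia.
rewrite PhiAux_S; have [lt_ik | ge_ik] := ltnP i.+2 k.+1; first by apply: IH; lia.
have -> : k = i.+1 by lia.
by rewrite fc_PhiAux_degen1 // => [|b]; apply: fc_Psi_last.
Qed.

Lemma psiG_id n i (y : C G n) : folded y -> 1 <= i < n -> psiG G n i y = y.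
Proof.
case: n y => [|[|m]] y //= y_folded /andP[i_gt0 lt_in].
apply: psi_id; first lia.
move=> a; apply: (degen1_dgP (k := i)); last lia.
by case: i i_gt0 lt_in => [//|i] _ lt_in; apply: y_folded; lia.
Qed.

Lemma Psi_id n r (y : C G n) : folded y -> r <= n -> Psi n r y = y.
Proof.
move=> y_folded; elim: r => [//|[//|r] IH] le_rn.
by rewrite -[Psi n r.+2 y]/(psiG G n r.+1 (Psi n r.+1 y)) IH ?psiG_id //; lia.
Qed.

Lemma PhiImageE n : PhiImage G n = @folded n.
Proof.
apply: functional_extensionality => y; apply: propositional_extensionality.
split=> [[x <-] | y_folded]; first exact: folded_Phi.
exists y; rewrite /Phi.
suff PhiAux_id k : k <= n -> PhiAux n k y = y by apply: PhiAux_id.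
by elim: k => [//|k IH] le_kn; rewrite PhiAux_S Psi_id ?IH //; lia.
Qed.

Lemma collapse_S k m a (x : C G m.+1) :
  collapse k.+1 m.+1 a x = dg m 1 (collapse k m a (fc m 1 a x)).
Proof. by []. Qed.

Lemma folded_fc1 m a (x : C G m.+1) : folded x -> folded (fc m 1 a x).
Proof.
case: m x => [//|m] x x_folded i b le_im.
rewrite -(fc_fc G m 1 i.+3 a b x) //; try lia.
by apply: (degen1_fc_le a (x_folded i.+1 b _)); lia.
Qed.

Lemma fc1_fc1_folded m a b (x : C G m.+2) : folded x ->
  fc m 1 b (fc m.+1 1 a x) = fc m 1 b (fc m.+1 1 b x).
Proof.
move=> x_folded.
rewrite -(fc_fc G m 1 2 a b x) // -(fc_fc G m 1 2 b b x) //.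
by have [w -> _] := x_folded 0 b isT; rewrite !(fc_dg_eq G m 1).
Qed.

Lemma collapse_folded j m a (x : C G m.+1) : folded x -> 1 <= j <= m.+1 ->
  collapse j m.+1 a x = dg m j (fc m j a x).
Proof.
elim: j m x => [|k IH] m x x_folded /andP[j_gt0 le_jm]; first lia.
rewrite collapse_S; case: k IH j_gt0 le_jm => [//|k] IH j_gt0 le_jm.
case: m x x_folded le_jm => [|m] x x_folded le_jm; first lia.
rewrite IH; [|exact: folded_fc1|lia].
rewrite -(fc_fc G m 1 k.+2 a a x) // (dg_dg G m 1 k.+1) //; try lia.
by have [w -> _] := x_folded k a ltac:(lia); rewrite (fc_dg_eq G m 1).
Qed.

Lemma collapse_collapse_ge l k m a b (x : C G m) : l <= k ->
  collapse l m b (collapse k m a x) = collapse k m a x.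
Proof.
elim: l k m x => [//|l IH] [|k] [|m] x le_lk //; try lia.
by rewrite !collapse_S (fc_dg_eq G m 1) ?IH.
Qed.

Lemma collapse_collapse_lt k l m a b (x : C G m) : folded x -> k < l <= m ->
  collapse l m b (collapse k m a x) = collapse l m b x.
Proof.
elim: k l m x => [//|k IH] [|l] [|m] x x_folded /andP[lt_kl le_lm] //; try lia.
rewrite !collapse_S (fc_dg_eq G m 1) // IH; [|exact: folded_fc1|lia].
case: l lt_kl le_lm IH => [|l] lt_kl le_lm IH; first lia.
case: m x x_folded le_lm IH => [|m] x x_folded le_lm IH; first lia.
by rewrite !collapse_S fc1_fc1_folded.
Qed.

Lemma folded_dg1 n (x : C G n) : folded x -> folded (dg n 1 x).
Proof.
case: n x => [|n] x x_folded i a le_in; first lia.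
rewrite (fc_dg_gt G n i.+2 1 a x) //; try lia.
exists (fc n i.+1 a x) => //.
by case: i le_in => [//|i] le_in; apply: x_folded; lia.
Qed.

Lemma folded_collapse k n a (x : C G n) : folded x -> folded (collapse k n a x).
Proof.
elim: k n x => [//|k IH] [//|m] x x_folded.
by rewrite collapse_S; apply/folded_dg1/IH/folded_fc1.
Qed.

Lemma folded_cp m j (x y : C G m.+1) : folded x -> folded y -> 1 <= j <= m.+1 ->
  fc m j true x = fc m j false y -> folded (cp m j x y).
Proof.
case: m x y => [|m] x y x_folded y_folded /andP[j_gt0 le_jm] Exy i a le_im; first lia.
have [lt_ij | gt_ij | Eij] := ltngtP i.+2 j.
- rewrite (fc_cp_lt G m i.+2 j a x y) //.
  apply: degen1_cp; [exact: x_folded | exact: y_folded | lia |].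
  by rewrite -!(fc_fc G m i.+2 j) ?Exy //; lia.
- rewrite (fc_cp_gt G m i.+2 j a x y) // (degen1_cp_id (k := i.+1));
    [exact: x_folded | exact: x_folded | exact: y_folded | lia |].
  by rewrite !(fc_fc G m j i.+2) ?Exy //; lia.
- subst j; have [e1 e2] := fc_cp_eq G m.+1 i.+2 x y isT le_jm Exy.
  by case: a; [rewrite e2; exact: y_folded | rewrite e1; exact: x_folded].
Qed.

Lemma dg_fc_cp n j l b (x y : C G n.+1) :
  1 <= j <= n.+1 -> 1 <= l <= n.+1 -> j != l -> fc n j true x = fc n j false y ->
  fc n j true (dg n l (fc n l b x)) = fc n j false (dg n l (fc n l b y)) /\
  dg n l (fc n l b (cp n j x y)) = cp n j (dg n l (fc n l b x)) (dg n l (fc n l b y)).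
Proof.
case: n x y => [|n] x y /andP[j_gt0 le_jn] /andP[l_gt0 le_ln] /eqP ne_jl Exy; first lia.
have [lt_lj | lt_jl | Elj] := ltngtP l j; last by case: ne_jl.
- have Ef : fc n j.-1 true (fc n.+1 l b x) = fc n j.-1 false (fc n.+1 l b y).
    by rewrite -!(fc_fc G n l j) ?Exy //; lia.
  rewrite !(fc_dg_gt G n j l) //; try lia.
  split; first by rewrite Ef.
  rewrite (fc_cp_lt G n l j b x y) // (dg_cp_le G n l j.-1) ?prednK //; lia.
- have Ef : fc n j true (fc n.+1 l b x) = fc n j false (fc n.+1 l b y).
    by rewrite !(fc_fc G n j l) ?Exy //; lia.
  rewrite !(fc_dg_lt G n j l) //; try lia.
  split; first by rewrite Ef.
  rewrite (fc_cp_gt G n l j b x y) // (dg_cp_gt G n l j) //; lia.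
Qed.

Section PositiveDimension.
Variable m : nat.
Local Notation d := (dPhi G m.+1).
Local Notation c := (compPhi G m.+1).

Lemma folded_dPhi p a x : folded x -> folded (d p a x).
Proof. by rewrite /dPhi; case: (p < m.+1) => // /folded_collapse. Qed.

Lemma folded_compPhi p x y z : folded x -> folded y -> c p x y z -> folded z.
Proof.
rewrite /compPhi; case: ltnP => lt_pm x_folded y_folded [Exy ->] //.
by apply: folded_cp => //; lia.
Qed.

Lemma compPhi_fun p x y z z' : c p x y z -> c p x y z' -> z = z'.
Proof. by rewrite /compPhi; case: (p < m.+1) => -[_ ->] [_ ->]. Qed.

Lemma compPhi_defined p x y : folded x -> folded y ->
  (exists z, c p x y z) <-> d p true x = d p false y.
Proof.
rewrite /compPhi /dPhi; case: ltnP => lt_pm x_folded y_folded; last first.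
  by split=> [[z []] | <-] //; exists x.
rewrite !collapse_folded //; try lia.
split=> [[z [-> _]] // | /dg_inj Exy].
by exists (cp m (m.+1 - p) x y); split=> //; apply: Exy; lia.
Qed.

Lemma dPhi_dPhi_lt p q a b x : folded x -> q < p -> d q b (d p a x) = d q b x.
Proof.
rewrite /dPhi => x_folded lt_qp; case: (ltnP p m.+1) => lt_pm //.
have -> : q < m.+1 by lia.
by rewrite collapse_collapse_lt //; lia.
Qed.

Lemma dPhi_dPhi_ge p q a b x : p <= q -> d q b (d p a x) = d p a x.
Proof.
rewrite /dPhi => le_pq; case: (ltnP p m.+1) => lt_pm; case: (ltnP q m.+1) => lt_qm //.
  by rewrite collapse_collapse_ge //; lia.
by lia.
Qed.

Lemma dPhi_compPhi p x y z : folded x -> folded y -> c p x y z ->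
  d p false z = d p false x /\ d p true z = d p true y.
Proof.
move=> x_folded y_folded cxyz; have z_folded := folded_compPhi x_folded y_folded cxyz.
move: cxyz; rewrite /compPhi /dPhi; case: ltnP => lt_pm [Exy Ez]; subst z => //.
rewrite !collapse_folded //; try lia.
by have [-> ->] := fc_cp_eq G m (m.+1 - p) x y ltac:(lia) ltac:(lia) Exy.
Qed.

Lemma compPhi_dPhi p q b x y z : folded x -> folded y -> c p x y z -> q != p ->
  c p (d q b x) (d q b y) (d q b z).
Proof.
move=> x_folded y_folded cxyz ne_qp; have z_folded := folded_compPhi x_folded y_folded cxyz.
move: cxyz; rewrite /compPhi /dPhi; case: (ltnP p m.+1) => lt_pm [Exy Ez]; subst z.
  case: (ltnP q m.+1) => lt_qm; last by [].
  rewrite !collapse_folded //; try lia.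
  by apply: dg_fc_cp => //; lia.
by subst y.
Qed.

Lemma compPhi_unit p x : folded x -> c p (d p false x) x x /\ c p x (d p true x) x.
Proof.
move=> x_folded; rewrite /compPhi /dPhi; case: ltnP => lt_pm //.
have j_bounds : 1 <= m.+1 - p <= m.+1 by lia.
have [unit_l unit_r] := cp_unit G m (m.+1 - p) x ltac:(lia) ltac:(lia).
by rewrite !collapse_folded // !(fc_dg_eq G m) //; lia.
Qed.

Lemma compPhi_assoc p x y z xy yz : c p x y xy -> c p y z yz ->
  exists w, c p xy z w /\ c p x yz w.
Proof.
rewrite /compPhi; case: ltnP => lt_pm [Exy ->] [Eyz ->]; last by exists z; subst.
have [_ e2] := fc_cp_eq G m (m.+1 - p) x y ltac:(lia) ltac:(lia) Exy.
have [e3 _] := fc_cp_eq G m (m.+1 - p) y z ltac:(lia) ltac:(lia) Eyz.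
exists (cp m (m.+1 - p) (cp m (m.+1 - p) x y) z).
by rewrite e2 e3 (cp_assoc G) //; lia.
Qed.

Lemma compPhi_interchange p q x y x' y' xy x'y' w xx' yy' w' : p != q ->
  c p x y xy -> c p x' y' x'y' -> c q xy x'y' w ->
  c q x x' xx' -> c q y y' yy' -> c p xx' yy' w' -> w = w'.
Proof.
move=> ne_pq; rewrite /compPhi.
case: (ltnP p m.+1) => lt_pm; case: (ltnP q m.+1) => lt_qm.
- move=> [E1 ->] [E2 ->] [_ ->] [E3 ->] [E4 ->] [_ ->].
  by rewrite (cp_interchange G) //; lia.
all: by move=> [? ?] [? ?] [? ?] [? ?] [? ?] [? ?]; subst.
Qed.

End PositiveDimension.

Lemma omega_cat_folded n : omega_cat (@folded n) (dPhi G n) (compPhi G n).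
Proof.
case: n => [|m]; first by apply: omega_cat_discrete => *; rewrite /dPhi ltn0.
split; first by move=> p a x; apply: folded_dPhi.
split; first by move=> p x y z x_folded y_folded; apply: folded_compPhi.
split; first by move=> p x y z z' _ _; apply: compPhi_fun.
split; first by move=> p x y; apply: compPhi_defined.
split; first by move=> p q a b x; apply: dPhi_dPhi_lt.
split; first by move=> p q a b x _; apply: dPhi_dPhi_ge.
split; first by move=> p x y z x_folded y_folded; apply: dPhi_compPhi.
split; first by move=> p q b x y z x_folded y_folded; apply: compPhi_dPhi.
split; first by move=> p x; apply: compPhi_unit.
split; first by move=> p x y z xy yz _ _ _; apply: compPhi_assoc.
split; first by move=> p q x y x' y' xy x'y' w xx' yy' w' ne_pq _ _ _ _;
  apply: compPhi_interchange.
move=> x _; apply: (dimension_exists (N := m.+1)) => [p q a b | a].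
  exact: dPhi_dPhi_ge.
by rewrite /dPhi ltnn.
Qed.

Lemma dg1_dPhi n p a (x : C G n) : dg n 1 (dPhi G n p a x) = dPhi G n.+1 p a (dg n 1 x).
Proof.
rewrite /dPhi; case: (ltngtP p n) => [lt_pn | lt_np | ->].
- rewrite ifT ?subSn ?collapse_S ?(fc_dg_eq G n 1) //; lia.
- by rewrite ifF //; lia.
- by rewrite ltnSn subSnn collapse_S (fc_dg_eq G n 1).
Qed.

Lemma cp_dg1_idem n y : cp n 1 (dg n 1 y) (dg n 1 y) = dg n 1 y.
Proof. by have := (cp_unit G n 1 (dg n 1 y) isT isT).1; rewrite (fc_dg_eq G n 1). Qed.

Lemma dg1_compPhi n p (x y z : C G n) : compPhi G n p x y z ->
  compPhi G n.+1 p (dg n 1 x) (dg n 1 y) (dg n 1 z).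
Proof.
case: n x y z => [|m] x y z /=.
  by move=> [-> ->]; case: p => [|p] //=; rewrite !(fc_dg_eq G 0 1) // cp_dg1_idem.
case: (ltnP p m.+1) => lt_pm [Exy ->].
  rewrite ifT; last lia.
  rewrite subSn; last lia.
  rewrite !(fc_dg_gt G m (m.+1 - p).+1 1) ?Exy //; try lia.
  by rewrite (dg_cp_le G m 1 (m.+1 - p)) //; lia.
subst y; case: (ltnP p m.+2) => lt_pm2 //.
by rewrite (_ : m.+2 - p = 1) ?(fc_dg_eq G m.+1 1) ?cp_dg1_idem //; lia.
Qed.

End Folding.

Theorem theorem3p8 (G : cubical_omega_cat) (n : nat) :
  omega_cat (PhiImage G n) (dPhi G n) (compPhi G n) /\
  omega_hom (PhiImage G n) (dPhi G n) (compPhi G n)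
            (PhiImage G n.+1) (dPhi G n.+1) (compPhi G n.+1)
            (dg G n 1).
Proof.
rewrite !PhiImageE; split; first exact: omega_cat_folded.
split; first exact: folded_dg1.
split; first by move=> p a x _; apply: dg1_dPhi.
by move=> p x y z _ _; apply: dg1_compPhi.
Qed.
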